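(* Let $d\ge 1$ and let $f(t)=1+\sum_{i=1}^{d}\binom{x_i}{i}t^{i}$ be a polynomial of degree $d$ with positive real coefficients, where $x_1,\dots,x_d$ are real numbers with $x_i\ge i-1$. Suppose $f(t)$ is ultra log-concave and $x_d\ge d$. Then $x_1\ge x_2\ge\cdots\ge x_d$.
   Context: For a real number $x$ and an integer $k\ge 0$, $\binom{x}{k}=\frac{x(x-1)\cdots(x-k+1)}{k!}$. For every integer $k\ge1$ and real $y>0$ there is a unique real $x\ge k-1$ with $y=\binom{x}{k}$, so the $x_i$ are uniquely determined by the coefficients. A polynomial $a_0+a_1t+\cdots+a_dt^d$ of degree $d$ is called ultra log-concave if $\big(a_i/\binom{d}{i}\big)^2\ge \frac{a_{i-1}}{\binom{d}{i-1}}\cdot\frac{a_{i+1}}{\binom{d}{i+1}}$ for all $1\le i\le d-1$. *)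

From mathcomp Require Import all_boot all_order all_algebra.
From mathcomp Require Import reals.
Set Implicit Arguments. Unset Strict Implicit. Unset Printing Implicit Defensive.
Import Order.TTheory GRing.Theory Num.Theory.
Local Open Scope ring_scope.

Definition rbinom (R : realType) (x : R) (k : nat) : R :=
  (\prod_(j < k) (x - j%:R)) / (k`!)%:R.

Definition ultra_log_concave (R : realType) (p : {poly R}) : Prop :=
  let d := (size p).-1 in
  forall i : nat, (1 <= i)%N -> (i <= d - 1)%N ->
    (p`_i / ('C(d, i))%:R) ^+ 2 >=
      (p`_i.-1 / ('C(d, i.-1))%:R) * (p`_i.+1 / ('C(d, i.+1))%:R).

Definition fpoly (R : realType) (d : nat) (x : nat -> R) : {poly R} :=
  1 + \sum_(1 <= i < d.+1) (rbinom (x i) i) *: 'X^i.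

From mathcomp Require Import all_boot all_order all_algebra.
From mathcomp Require Import reals lra.
Set Implicit Arguments. Unset Strict Implicit. Unset Printing Implicit Defensive.
Import Order.TTheory GRing.Theory Num.Theory.
Local Open Scope ring_scope.

(* Write b_k = a_k / C(d, k); for k >= 1 this is the product of the factors
   (x_k - j) / (d - j), j < k.  Ultra log-concavity says that b is log-concave,
   with b_0 = 1, and x_d >= d gives b_d >= 1.  A positive log-concave sequence
   never drops below both of its endpoints, so every b_i >= 1, which forces
   x_i >= d.  Log-concavity from b_0 = 1 gives b_(i+1)^i <= b_i^(i+1), whereas
   for y >= d the factors (y - j) / (d - j) increase with j, so the product
   for (y, i+1) raised to i dominates the product for (y, i) raised to i+1.
   Since the product is strictly increasing in y >= d, x_(i+1) > x_i would
   contradict the first inequality. *)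

Section LogConcaveSequence.

Variables (R : realFieldType) (b : nat -> R) (d : nat).
Hypothesis b_gt0 : forall k, (k <= d)%N -> 0 < b k.
Hypothesis b_logconcave : forall m, (0 < m < d)%N -> b m.-1 * b m.+1 <= b m ^+ 2.

(* [ratio 0 = 1], since [0.-1 = 0]. *)
Let ratio k := b k / b k.-1.

Let b_pred_gt0 k : (k <= d)%N -> 0 < b k.-1.
Proof. by move=> kd; rewrite b_gt0 // (leq_trans (leq_pred k)). Qed.

Let ratio_gt0 k : (k <= d)%N -> 0 < ratio k.
Proof. by move=> kd; apply: divr_gt0; [exact: b_gt0 | exact: b_pred_gt0]. Qed.

Let b_ratio k : (k <= d)%N -> b k = b k.-1 * ratio k.
Proof. by move=> kd; rewrite /ratio mulrC divfK // gt_eqF ?b_pred_gt0. Qed.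

Let ratio_succ m : (0 < m < d)%N -> ratio m.+1 <= ratio m.
Proof.
move=> /andP[m_gt0 md]; have mdW := ltnW md.
rewrite /ratio /= ler_pdivrMr ?b_gt0 // mulrAC ler_pdivlMr ?b_pred_gt0 //.
by rewrite mulrC -expr2 b_logconcave ?m_gt0.
Qed.

Let ratio_noninc k m : (0 < k)%N -> (k <= m <= d)%N -> ratio m <= ratio k.
Proof.
move=> k_gt0 /andP[]; elim: m => [|m IH].
  by rewrite leqn0 => /eqP k0; rewrite k0 in k_gt0.
rewrite leq_eqVlt => /orP[/eqP-> //|km] md.
apply: le_trans (IH km (ltnW md)); apply: ratio_succ.
by rewrite md (leq_trans k_gt0).
Qed.

Let b0_le i : (i <= d)%N -> 1 <= ratio i -> b 0 <= b i.
Proof.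
move=> le_id ratio_ge1; suff b0_le_m m : (m <= i)%N -> b 0 <= b m by exact: b0_le_m.
elim: m => [//|m IH] mi; have md := leq_trans mi le_id.
rewrite [b m.+1]b_ratio //=; apply: le_trans (IH (ltnW mi)) _.
rewrite ler_pMr ?b_gt0 ?(ltnW md) //.
by rewrite (le_trans ratio_ge1) // ratio_noninc // mi.
Qed.

Let bd_le i : (i <= d)%N -> ratio i < 1 -> b d <= b i.
Proof.
move=> le_id ratio_lt1; have i_gt0 : (0 < i)%N.
  by case: i le_id ratio_lt1 => // le_id; rewrite /ratio divff ?ltxx // gt_eqF ?b_gt0.
suff bn_le n : (i + n <= d)%N -> b (i + n) <= b i by rewrite -(subnKC le_id) bn_le ?subnKC.
elim: n => [|n IH]; first by rewrite addn0.
rewrite addnS => ind; rewrite [b (i + n).+1]b_ratio //=.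
apply: le_trans (IH (ltnW ind)); rewrite ger_pMr ?b_gt0 ?(ltnW ind) //.
by rewrite ltW // (le_lt_trans _ ratio_lt1) // ratio_noninc // ind ltnW // ltnS leq_addr.
Qed.

Lemma logconcave_ge_min i : (i <= d)%N -> Num.min (b 0) (b d) <= b i.
Proof.
move=> le_id; have [ratio_lt1|ratio_ge1] := ltrP (ratio i) 1.
  by rewrite ge_min bd_le ?orbT.
by rewrite ge_min b0_le.
Qed.

Lemma logconcave_pow i : (i < d)%N -> b 0 * b i.+1 ^+ i <= b i ^+ i.+1.
Proof.
move=> lt_id; have le_id := ltnW lt_id; set r := ratio i.+1.
have r_ge0 : 0 <= r by rewrite ltW ?ratio_gt0.
have b_ge m : (m <= i)%N -> b 0 * r ^+ m <= b m.
  elim: m => [|m IH] mi; first by rewrite mulr1.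
  have md := leq_trans mi le_id.
  rewrite [b m.+1]b_ratio //= exprSr mulrA; apply: ler_pM => //.
  - by rewrite mulr_ge0 ?exprn_ge0 // ltW ?b_gt0.
  - exact: IH (ltnW mi).
  - by apply: ratio_noninc => //; rewrite lt_id andbT; exact: ltnW.
rewrite (b_ratio lt_id) /= -/r exprMn mulrCA exprSr.
by rewrite ler_pM ?b_ge ?exprn_ge0 // ?mulr_ge0 ?exprn_ge0 // ltW ?b_gt0.
Qed.

End LogConcaveSequence.

Definition binom_ratio (R : numFieldType) (d : nat) (y : R) (n : nat) : R :=
  \prod_(0 <= j < n) ((y - j%:R) / (d%:R - j%:R)).

Section BinomRatio.

Variables (R : realFieldType) (d : nat).

Let factor (y : R) (j : nat) : R := (y - j%:R) / (d%:R - j%:R).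

Let denom_gt0 j : (j < d)%N -> 0 < d%:R - j%:R :> R.
Proof. by move=> jd; rewrite subr_gt0 ltr_nat. Qed.

Let factor_ge0 (y : R) j : (j < d)%N -> j%:R <= y -> 0 <= factor y j.
Proof. by move=> jd jy; apply: divr_ge0; [rewrite subr_ge0 | exact/ltW/denom_gt0]. Qed.

Let factor_ge1 (y : R) j : (j < d)%N -> d%:R <= y -> 1 <= factor y j.
Proof. by move=> jd dy; rewrite /factor ler_pdivlMr ?denom_gt0 // mul1r lerB. Qed.

Let factor_lt1 (y : R) j : (j < d)%N -> y < d%:R -> factor y j < 1.
Proof. by move=> jd yd; rewrite /factor ltr_pdivrMr ?denom_gt0 // mul1r ltrD2r. Qed.

Let factor_lt y z j : (j < d)%N -> y < z -> factor y j < factor z j.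
Proof. by move=> jd yz; rewrite /factor ltr_pM2r ?invr_gt0 ?denom_gt0 // ltrD2r. Qed.

Let factor_le (y : R) i j : (i <= j < d)%N -> d%:R <= y -> factor y i <= factor y j.
Proof.
move=> /andP[ij jd] dy; have lt_id := leq_ltn_trans ij jd.
have := denom_gt0 jd; have := denom_gt0 lt_id; have : i%:R <= j%:R :> R by rewrite ler_nat.
rewrite /factor ler_pdivrMr ?denom_gt0 // mulrAC ler_pdivlMr ?denom_gt0 //.
move=> *; nra.
Qed.

Let factor_ge0_below (y : R) n j : (n <= d)%N -> (j < n)%N -> n.-1%:R <= y ->
  0 <= factor y j.
Proof.
move=> nd jn ny; apply: factor_ge0; first exact: leq_trans nd.
by apply: le_trans ny; rewrite ler_nat -ltnS prednK // (leq_ltn_trans _ jn).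
Qed.

Lemma binom_ratio_ge1 (y : R) n : (n <= d)%N -> d%:R <= y -> 1 <= binom_ratio d y n.
Proof.
move=> nd dy; rewrite /binom_ratio big_seq.
apply: (big_ind (fun a : R => 1 <= a)) => [//|a b|j]; first exact: mulr_ege1.
by rewrite mem_index_iota => /andP[_ jn]; apply: factor_ge1 (leq_trans jn nd) dy.
Qed.

Lemma binom_ratio_lt1 (y : R) n : (0 < n <= d)%N -> n.-1%:R <= y -> y < d%:R ->
  binom_ratio d y n < 1.
Proof.
move=> /andP[n_gt0 nd] ny yd; have -> : 1 = \prod_(0 <= j < n) 1 :> R by rewrite big1.
apply: ltr_prod_nat => // j /andP[_ jn].
by rewrite (factor_ge0_below nd jn ny) factor_lt1 // (leq_trans jn nd).
Qed.

Lemma binom_ratio_lt (y z : R) n : (0 < n <= d)%N -> d%:R <= y -> y < z ->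
  binom_ratio d y n < binom_ratio d z n.
Proof.
move=> /andP[n_gt0 nd] dy yz; apply: ltr_prod_nat => // j /andP[_ jn].
have jd := leq_trans jn nd.
by rewrite factor_ge0 ?factor_lt // (le_trans _ dy) // ler_nat ltnW.
Qed.

Lemma binom_ratio_pow (y : R) n : (n < d)%N -> d%:R <= y ->
  binom_ratio d y n ^+ n.+1 <= binom_ratio d y n.+1 ^+ n.
Proof.
move=> nd dy; have ratio_le : binom_ratio d y n <= factor y n ^+ n.
  rewrite -{3}(subn0 n) -prodr_const_nat /binom_ratio !big_seq.
  apply: ler_prod => j; rewrite mem_index_iota => /andP[_ jn].
  have jd := ltn_trans jn nd.
  rewrite factor_ge0 ?factor_le ?(ltnW jn) //.
  by rewrite (le_trans _ dy) // ler_nat ltnW.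
rewrite /binom_ratio (big_nat_recr n 0) //= -/(binom_ratio d y n) exprMn exprSr.
by rewrite ler_wpM2l ?exprn_ge0 // (le_trans ler01) // binom_ratio_ge1 // ltnW.
Qed.

End BinomRatio.

Lemma rbinom_divC (R : realType) (d i : nat) (y : R) : (i <= d)%N ->
  rbinom y i / ('C(d, i))%:R = binom_ratio d y i.
Proof.
move=> id; rewrite /binom_ratio big_mkord /rbinom prodf_div -mulrA -invfM -natrM.
rewrite mulnC bin_ffact ffact_prod natr_prod; congr (_ / _); apply: eq_bigr => j _.
by rewrite natrB // ltnW // (leq_trans (ltn_ord j)).
Qed.

Lemma coef_fpoly (R : realType) (d : nat) (x : nat -> R) i :
  (fpoly d x)`_i = if i == 0%N then 1 else if (i <= d)%N then rbinom (x i) i else 0.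
Proof.
rewrite /fpoly coefD coef1 coef_sum.
under eq_bigr => k _ do rewrite coefZ coefXn.
case: i => [|i] /=.
  rewrite big1_seq ?addr0 // => k /andP[_]; rewrite mem_index_iota.
  by case: k => [//|k] _; rewrite mulr0.
rewrite add0r; case: ifP => id.
  rewrite (bigD1_seq i.+1) ?mem_index_iota ?iota_uniq //= eqxx mulr1.
  by rewrite big1 ?addr0 // => k /negPf; rewrite eq_sym => ->; rewrite mulr0.
rewrite big1_seq // => k /andP[_]; rewrite mem_index_iota => /andP[_ kd].
by case: eqP => [ik|]; [move: kd; rewrite -ik ltnS id | rewrite mulr0].
Qed.

Lemma ultra_log_concave_normalized (R : realType) (p : {poly R}) m :
  ultra_log_concave p -> (0 < m < (size p).-1)%N ->
  let b k := p`_k / ('C((size p).-1, k))%:R in b m.-1 * b m.+1 <= b m ^+ 2.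
Proof. by move=> ulc /andP[m_gt0 md]; apply: ulc; rewrite // subn1 -ltnS (ltn_predK md). Qed.

Theorem theorem3p1 (R : realType) (d : nat) (x : nat -> R) :
  (1 <= d)%N ->
  (forall i : nat, (1 <= i <= d)%N -> (i.-1)%:R <= x i) ->
  size (fpoly d x) = d.+1 ->
  (forall i : nat, (i <= d)%N -> 0 < (fpoly d x)`_i) ->
  ultra_log_concave (fpoly d x) ->
  d%:R <= x d ->
  forall i : nat, (1 <= i < d)%N -> x i.+1 <= x i.
Proof.
move=> d_gt0 x_ge size_f f_gt0 f_ulc xd_ge i /andP[i_gt0 lt_id].
pose b k := (fpoly d x)`_k / ('C(d, k))%:R.
have b_gt0 k : (k <= d)%N -> 0 < b k by move=> kd; rewrite divr_gt0 ?f_gt0 ?ltr0n ?bin_gt0.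
have b_lc m : (0 < m < d)%N -> b m.-1 * b m.+1 <= b m ^+ 2.
  by move=> md; have := ultra_log_concave_normalized f_ulc; rewrite size_f; apply.
have b0 : b 0%N = 1 by rewrite /b coef_fpoly bin0 divr1.
have bE k : (0 < k <= d)%N -> b k = binom_ratio d (x k) k.
  by case: k => // k /= kd; rewrite /b coef_fpoly /= kd rbinom_divC.
have le_id := ltnW lt_id; have i_range : (0 < i <= d)%N by rewrite i_gt0.
have xi_ge : d%:R <= x i.
  have b_ge1 : 1 <= b i.
    apply: le_trans (logconcave_ge_min b_gt0 b_lc le_id).
    by rewrite le_min b0 lexx bE ?d_gt0 ?leqnn //= binom_ratio_ge1.
  rewrite leNgt; apply: contraTN b_ge1 => xi_lt.
  by rewrite -ltNge bE // binom_ratio_lt1 // x_ge.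
rewrite leNgt; apply/negP => xi_lt.
have := logconcave_pow b_gt0 b_lc lt_id; rewrite b0 mul1r !bE ?lt_id //.
apply/negP; rewrite -ltNge; apply: le_lt_trans (binom_ratio_pow lt_id xi_ge) _.
by rewrite ltrXn2r -?lt0n // ?binom_ratio_lt // (le_trans ler01) ?binom_ratio_ge1.
Qed.
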